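(* Let $K$ be a field of characteristic zero, $R=K[x,y,z]$ with the standard grading, and let $a,b,c,\beta,\gamma$ be integers with $a\geq c\geq 2$, $1\leq \beta\leq b-1$ and $\max\{1,b-a+1\}\leq \gamma\leq \min\{b-1,c-1\}$. Consider the ideal $$I=(x^a,\ y^b-x^{b-\gamma}z^\gamma,\ z^c,\ x^{a-b+\gamma}y^{b-\beta},\ y^{b-\beta}z^{c-\gamma})\subset R.$$ If one of $a,b,c$ is equal to two, then $R/I$ has the weak Lefschetz property.
   Context: A graded Artinian $K$-algebra $A=\bigoplus_i [A]_i$ has the weak Lefschetz property (WLP) if there exists a linear form $L\in[A]_1$ such that the multiplication map $\times L:[A]_i\to[A]_{i+1}$ has maximal rank (i.e. is injective or surjective) for every $i$. *)

From HB Require Import structures.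
From mathcomp Require Import all_boot all_order all_algebra.
From mathcomp Require Import mpoly.
Set Implicit Arguments. Unset Strict Implicit. Unset Printing Implicit Defensive.
Import GRing.Theory.
Local Open Scope ring_scope.

Section Graded.
Variable K : fieldType.
Notation R := {mpoly K[3]}.

(* p lies in [R]_d : p is homogeneous of total degree d (0 is in every [R]_d) *)
Definition homogd (d : nat) (p : R) : bool := p \is d.-homog.

Definition in_ideal (k : nat) (gens : 'I_k -> R) (f : R) : Prop :=
  exists g : 'I_k -> R, f = \sum_(i < k) g i * gens i.

(* A = R / I with I = (gens) homogeneous; [A]_d = [R]_d / ([R]_d ∩ I).
   Multiplication by (the class of) L from [A]_d to [A]_(d+1):
   injective  : for f in [R]_d, L f in I implies f in I;
   surjective : every h in [R]_(d+1) is L f modulo I for some f in [R]_d. *)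
Definition mult_injective (k : nat) (gens : 'I_k -> R) (L : R) (d : nat) : Prop :=
  forall f : R, homogd d f -> in_ideal gens (L * f) -> in_ideal gens f.

Definition mult_surjective (k : nat) (gens : 'I_k -> R) (L : R) (d : nat) : Prop :=
  forall h : R, homogd d.+1 h ->
    exists2 f : R, homogd d f & in_ideal gens (h - L * f).

Definition quotient_artinian (k : nat) (gens : 'I_k -> R) : Prop :=
  exists N : nat, forall d : nat, (N <= d)%N ->
    forall f : R, homogd d f -> in_ideal gens f.

Definition hasWLP (k : nat) (gens : 'I_k -> R) : Prop :=
  quotient_artinian gens /\
  exists L : R, homogd 1 L /\
    forall i : nat, mult_injective gens L i \/ mult_surjective gens L i.

End Graded.

Definition xv {K : fieldType} : {mpoly K[3]} := 'X_(0 : 'I_3).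
Definition yv {K : fieldType} : {mpoly K[3]} := 'X_(1 : 'I_3).
Definition zv {K : fieldType} : {mpoly K[3]} := 'X_(2 : 'I_3).

Definition gensI (K : fieldType) (a b c beta gamma : nat) : 'I_5 -> {mpoly K[3]} :=
  fun i =>
    match val i with
    | 0 => xv ^+ a
    | 1 => yv ^+ b - xv ^+ (b - gamma) * zv ^+ gamma
    | 2 => zv ^+ c
    | 3 => xv ^+ (a + gamma - b) * yv ^+ (b - beta)
    | _ => yv ^+ (b - beta) * zv ^+ (c - gamma)
    end.

(* Since one of a, b, c equals 2, gamma = 1 and the binomial generator is
   y^b - x^(b-1) z. Grading x, y, z by (degree, weight) = (1,0), (1,1), (1,b)
   makes I bihomogeneous, and the monomials x^i y^j z^k with j < b outside the
   monomial part of I ("standard" monomials) give a basis of R/I with at most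
   one element in each bidegree. Multiplication by L = x + y sends the basis
   element of bidegree (d, w) to the sum of those of bidegrees (d+1, w) and
   (d+1, w+1), so in each degree it is a bidiagonal 0/1 matrix, and maximal
   rank reduces to a combinatorial comparison of the weights occupied in
   degrees d and d+1. The coordinates in this basis are read off from the
   substitution x, y, z |-> T, T s, T s^b, which kills the binomial. *)

From mathcomp Require Import all_boot all_order all_algebra.
From mathcomp Require Import mpoly.
From mathcomp Require Import zify ring.
Set Implicit Arguments. Unset Strict Implicit. Unset Printing Implicit Defensive.
Import GRing.Theory.
Local Open Scope ring_scope.

Section Monomials.
Variable K : fieldType.
Local Notation R := {mpoly K[3]}.

Definition vx : 'I_3 := @Ordinal 3 0 isT.
Definition vy : 'I_3 := @Ordinal 3 1 isT.
Definition vz : 'I_3 := @Ordinal 3 2 isT.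

Fact mono_key : unit. Proof. exact: tt. Qed.
Definition mono := locked_with mono_key
  (fun i j k : nat => (U_(vx) *+ i + U_(vy) *+ j + U_(vz) *+ k)%MM : 'X_{1..3}).

Lemma monoE i j k : mono i j k = (U_(vx) *+ i + U_(vy) *+ j + U_(vz) *+ k)%MM.
Proof. by rewrite /mono unlock. Qed.

Lemma mono_vx i j k : mono i j k vx = i.
Proof. by rewrite monoE !mnmDE !mulmnE !mnm1E /=; lia. Qed.
Lemma mono_vy i j k : mono i j k vy = j.
Proof. by rewrite monoE !mnmDE !mulmnE !mnm1E /=; lia. Qed.
Lemma mono_vz i j k : mono i j k vz = k.
Proof. by rewrite monoE !mnmDE !mulmnE !mnm1E /=; lia. Qed.

Lemma mono_coords (m : 'X_{1..3}) : m = mono (m vx) (m vy) (m vz).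
Proof.
apply/mnmP => l; rewrite monoE !mnmDE !mulmnE !mnm1E.
case: l => [[|[|[|l]]] Hl] //=; rewrite ?muln1 ?muln0 ?addn0 ?add0n //.
all: by rewrite mul1n; congr (m _); apply: val_inj.
Qed.

Lemma mdegE3 (m : 'X_{1..3}) : mdeg m = (m vx + m vy + m vz)%N.
Proof.
rewrite mdegE !big_ord_recr big_ord0 /= add0n.
by congr (_ + _ + _); congr (m _); apply: val_inj.
Qed.

Lemma mdeg_mono i j k : mdeg (mono i j k) = (i + j + k)%N.
Proof. by rewrite mdegE3 mono_vx mono_vy mono_vz. Qed.

Lemma monoD i j k i' j' k' :
  (mono i j k + mono i' j' k')%MM = mono (i + i') (j + j') (k + k').
Proof. by apply/mnmP => l; rewrite !monoE !mnmDE !mulmnE; lia. Qed.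

Lemma mpolyX_mono i j k : 'X_[mono i j k] = (xv ^+ i * yv ^+ j * zv ^+ k : R).
Proof. by rewrite monoE !mpolyXD -!mpolyXn. Qed.

Lemma Lmul_mono i j k :
  (xv + yv) * 'X_[mono i j k] = 'X_[mono i.+1 j k] + 'X_[mono i j.+1 k] :> R.
Proof. by rewrite !mpolyX_mono !exprS /xv /yv; ring. Qed.

Definition weight (b : nat) (m : 'X_{1..3}) := (m vy + b * m vz)%N.

End Monomials.

Section Ideal.
Variables (K : fieldType) (n : nat) (gens : 'I_n -> {mpoly K[3]}).
Local Notation I := (in_ideal gens).

Lemma in_ideal0 : I 0.
Proof. by exists (fun _ => 0); rewrite big1 // => i _; rewrite mul0r. Qed.

Lemma in_idealD f g : I f -> I g -> I (f + g).
Proof.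
move=> [u ->] [v ->]; exists (fun i => u i + v i).
by rewrite -big_split; apply: eq_bigr => i _; rewrite mulrDl.
Qed.

Lemma in_idealMl r f : I f -> I (r * f).
Proof.
move=> [u ->]; exists (fun i => r * u i).
by rewrite mulr_sumr; apply: eq_bigr => i _; rewrite mulrA.
Qed.

Lemma in_idealN f : I f -> I (- f).
Proof. by move=> If; rewrite -mulN1r; apply: in_idealMl. Qed.

Lemma in_idealB f g : I f -> I g -> I (f - g).
Proof. by move=> If Ig; apply/in_idealD/in_idealN. Qed.

Lemma in_idealZ (c : K) f : I f -> I (c *: f).
Proof. by move=> If; rewrite -mul_mpolyC; apply: in_idealMl. Qed.

Lemma in_ideal_gen i r : I (r * gens i).
Proof.
exists (fun j => if j == i then r else 0).
by rewrite (bigD1 i) //= eqxx big1 ?addr0 // => j /negbTE ->; rewrite mul0r.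
Qed.

Lemma in_ideal_sum (T : eqType) (s : seq T) (F : T -> {mpoly K[3]}) :
  (forall t, t \in s -> I (F t)) -> I (\sum_(t <- s) F t).
Proof.
move=> Is; rewrite big_seq; apply: big_ind => //; first exact: in_ideal0.
exact: in_idealD.
Qed.

End Ideal.

Section Bigrading.
Variables (K : fieldType) (b : nat).
Local Notation R := {mpoly K[3]}.
Local Notation X m := ('X_[m] : R).

(* [psi p] lies in K[s][T]: the outer coefficient index is the degree, the
   inner one the weight. *)
Definition psi_var (l : 'I_3) : {poly {poly K}} :=
  'X * (if val l == 0%N then 1 else if val l == 1%N then 'X else 'X^b)%:P.

Definition psi (p : R) : {poly {poly K}} :=
  mmap ((@polyC {poly K}) \o (@polyC K)) psi_var p.

Lemma psiX m : psi (X m) = 'X^(mdeg m) * ('X^(weight b m))%:P.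
Proof.
rewrite /psi mmapX /mmap1 !big_ord_recr big_ord0 /= mul1r mdegE3 /weight /psi_var /=.
have -> : widen_ord (leqnSn 2) (widen_ord (leqnSn 1) ord_max) = vx by apply: val_inj.
have -> : widen_ord (leqnSn 2) ord_max = vy by apply: val_inj.
have -> : (ord_max : 'I_3) = vz by apply: val_inj.
by rewrite !exprMn !exprD exprM !rmorphM !rmorphXn /= polyC1 expr1n; ring.
Qed.

Lemma psiM p q : psi (p * q) = psi p * psi q.
Proof. exact: rmorphM. Qed.

Lemma psiB p q : psi (p - q) = psi p - psi q.
Proof. exact: rmorphB. Qed.

Definition bicoef (d w : nat) (p : R) : K := (psi p)`_d`_w.

Lemma bicoefD d w p q : bicoef d w (p + q) = bicoef d w p + bicoef d w q.
Proof. by rewrite /bicoef /psi rmorphD !coefD. Qed.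

Lemma bicoefB d w p q : bicoef d w (p - q) = bicoef d w p - bicoef d w q.
Proof. by rewrite /bicoef psiB !coefB. Qed.

Lemma bicoefZ d w (c : K) p : bicoef d w (c *: p) = c * bicoef d w p.
Proof. by rewrite /bicoef /psi mmapZ /= !coefCM. Qed.

Lemma bicoef_sum d w (T : Type) (s : seq T) (F : T -> R) :
  bicoef d w (\sum_(t <- s) F t) = \sum_(t <- s) bicoef d w (F t).
Proof.
elim: s => [|t s IHs]; first by rewrite !big_nil /bicoef /psi mmap0 !coef0.
by rewrite !big_cons bicoefD IHs.
Qed.

Lemma bicoefX d w m : bicoef d w (X m) = ((mdeg m == d) && (weight b m == w))%:R.
Proof.
rewrite /bicoef psiX coefXnM; case: ltnP => Hd.
  by rewrite coef0 (_ : (mdeg m == d) = false) //; apply/negbTE; rewrite neq_ltn Hd orbT.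
rewrite coefC; case: eqP => E.
  have -> : mdeg m == d by apply/eqP; lia.
  by rewrite /= coefXn eq_sym.
by rewrite (_ : (mdeg m == d) = false) /= ?coef0 //; apply/negbTE/eqP; lia.
Qed.

Lemma bicoefE d w p :
  bicoef d w p = \sum_(m <- msupp p) p@_m * ((mdeg m == d) && (weight b m == w))%:R.
Proof.
by rewrite {1}(mpolyE p) bicoef_sum; apply: eq_bigr => m _; rewrite bicoefZ bicoefX.
Qed.

Lemma bicoef_Lmul d w p : bicoef d.+1 w ((xv + yv) * p) =
  bicoef d w p + (if w is w'.+1 then bicoef d w' p else 0).
Proof.
rewrite /bicoef /psi rmorphM rmorphD /= /xv /yv !mmapX !mmap1U /psi_var /=.
rewrite polyC1 mulr1 -[T in T + _]mulr1 -mulrDr -mulrA coefXM /= mulrDl mul1r.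
by rewrite coefD coefCM coefD coefXM; case: w.
Qed.

End Bigrading.

Section SplitChainInduction.
Variables (A Up : pred nat) (P : nat -> Prop) (B : nat).
Hypotheses (P_offA : forall w, ~~ A w -> P w) (A_bounded : forall w, A w -> (w < B)%N).
Hypothesis up_step : forall w, A w -> Up w -> (P w.+1 -> P w) /\ (A w.+1 -> Up w.+1).
Hypothesis down_step : forall w, A w -> ~~ Up w ->
  ((forall w', w = w'.+1 -> P w') -> P w) /\ (forall w', w = w'.+1 -> A w' -> ~~ Up w').

(* On [A], [P] propagates downwards from the bound [B] along [Up] and upwards
   from [0] along its complement. *)
Lemma split_chain_ind w : P w.
Proof.
have up n v : (B <= v + n)%N -> A v -> Up v -> P v.
  elim: n v => [|n IHn] v Bv Av Uv; first by have := A_bounded Av; lia.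
  have [stepP stepU] := up_step Av Uv; apply: stepP.
  case Av1: (A v.+1); last by apply: P_offA; rewrite Av1.
  by apply: IHn; rewrite ?addSnnS ?stepU.
have down v : A v -> ~~ Up v -> P v.
  elim: v => [|v IHv] Av Uv; have [stepP stepU] := down_step Av Uv;
    apply: stepP => // v' [<-].
  case Av': (A v); last by apply: P_offA; rewrite Av'.
  exact: IHv (stepU _ erefl Av').
case Aw: (A w); last by apply: P_offA; rewrite Aw.
by case Uw: (Up w); [apply: (up B) | apply: down]; rewrite ?leq_addl ?Uw.
Qed.

End SplitChainInduction.

Section GammaOne.
Variables (K : fieldType) (a b c beta : nat).
Hypotheses (b_gt0 : (0 < b)%N) (b_le : (b <= a + 1)%N) (c_gt0 : (0 < c)%N).
Local Notation R := {mpoly K[3]}.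
Local Notation X m := ('X_[m] : R).
Local Notation q := (b - beta)%N.
Local Notation gens := (gensI K a b c beta 1).
Local Notation I := (in_ideal gens).
Local Notation L := (xv + yv : R).
Local Notation weight := (weight b).
Local Notation bicoef := (bicoef (K := K) b).

Lemma gensE0 : gens (@Ordinal 5 0 isT) = X (mono a 0 0).
Proof. by rewrite mpolyX_mono /gensI /= !expr0 !mulr1. Qed.
Lemma gensE1 : gens (@Ordinal 5 1 isT) = X (mono 0 b 0) - X (mono (b - 1) 0 1).
Proof. by rewrite !mpolyX_mono /gensI /= !expr0 !mulr1 !mul1r. Qed.
Lemma gensE2 : gens (@Ordinal 5 2 isT) = X (mono 0 0 c).
Proof. by rewrite mpolyX_mono /gensI /= !expr0 !mul1r. Qed.
Lemma gensE3 : gens (@Ordinal 5 3 isT) = X (mono (a + 1 - b) q 0).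
Proof. by rewrite mpolyX_mono /gensI /= !expr0 mulr1. Qed.
Lemma gensE4 : gens (@Ordinal 5 4 isT) = X (mono 0 q (c - 1)).
Proof. by rewrite mpolyX_mono /gensI /= !expr0 mul1r. Qed.

Lemma in_ideal_Xmul (l : 'I_5) e m : gens l = X e -> I (X (m + e)%MM).
Proof. by move=> gens_l; rewrite mpolyXD -gens_l; apply: in_ideal_gen. Qed.

Definition standard (i j k : nat) : bool :=
  [&& (i < a)%N, (j < b)%N, (k < c)%N, ~~ ((a + 1 - b <= i)%N && (q <= j)%N)
    & ~~ ((q <= j)%N && (c - 1 <= k)%N)].

Definition standardm (m : 'X_{1..3}) := standard (m vx) (m vy) (m vz).

Lemma X_in_ideal_nonstandard i j k :
  (j < b)%N -> ~~ standard i j k -> I (X (mono i j k)).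
Proof.
move=> jb nstd.
have : (a <= i)%N \/ (c <= k)%N \/ (a + 1 - b <= i)%N /\ (q <= j)%N
        \/ (q <= j)%N /\ (c - 1 <= k)%N.
  by move: nstd; rewrite /standard jb /=; lia.
case=> [ai|[ck|[[ai qj]|[qj ck]]]].
- have -> : mono i j k = (mono (i - a) j k + mono a 0 0)%MM.
    by rewrite monoD; congr mono; lia.
  exact: in_ideal_Xmul gensE0.
- have -> : mono i j k = (mono i j (k - c) + mono 0 0 c)%MM.
    by rewrite monoD; congr mono; lia.
  exact: in_ideal_Xmul gensE2.
- have -> : mono i j k = (mono (i - (a + 1 - b)) (j - q) k + mono (a + 1 - b) q 0)%MM.
    by rewrite monoD; congr mono; lia.
  exact: in_ideal_Xmul gensE3.
- have -> : mono i j k = (mono i (j - q) (k - (c - 1)) + mono 0 q (c - 1))%MM.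
    by rewrite monoD; congr mono; lia.
  exact: in_ideal_Xmul gensE4.
Qed.

Definition nf (m : 'X_{1..3}) :=
  mono (m vx + (b - 1) * (m vy %/ b)) (m vy %% b) (m vz + m vy %/ b).

Lemma binomial_in_ideal i j k :
  I (X (mono i (j + b) k) - X (mono (i + (b - 1)) j (k + 1))).
Proof.
have -> : X (mono i (j + b) k) - X (mono (i + (b - 1)) j (k + 1)) =
          X (mono i j k) * gens (@Ordinal 5 1 isT).
  by rewrite gensE1 mulrBr -!mpolyXD !monoD !addn0.
exact: in_ideal_gen.
Qed.

Lemma binomial_iter_in_ideal t i j k :
  I (X (mono i (j + t * b) k) - X (mono (i + (b - 1) * t) j (k + t))).
Proof.
elim: t i j k => [|t IHt] i j k.
  by rewrite mul0n muln0 !addn0 subrr; apply: in_ideal0.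
have -> : X (mono i (j + t.+1 * b) k) - X (mono (i + (b - 1) * t.+1) j (k + t.+1)) =
  (X (mono i ((j + b) + t * b) k) - X (mono (i + (b - 1) * t) (j + b) (k + t))) +
  (X (mono (i + (b - 1) * t) (j + b) (k + t)) -
   X (mono (i + (b - 1) * t + (b - 1)) j (k + t + 1))).
  by rewrite addrA subrK; congr (X (mono _ _ _) - X (mono _ _ _));
    rewrite ?mulSn ?mulnS; lia.
by apply: in_idealD; [apply: IHt | apply: binomial_in_ideal].
Qed.

Lemma X_sub_nf_in_ideal m : I (X m - X (nf m)).
Proof.
by rewrite {1}[m]mono_coords {1}(divn_eq (m vy) b) addnC; apply: binomial_iter_in_ideal.
Qed.

Lemma mdeg_nf m : mdeg (nf m) = mdeg m.
Proof. by rewrite /nf mdeg_mono mdegE3 {3}(divn_eq (m vy) b); move: b_gt0; nia. Qed.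

Lemma weight_nf m : weight (nf m) = weight m.
Proof. by rewrite /weight /nf mono_vy mono_vz {3}(divn_eq (m vy) b); lia. Qed.

Lemma nf_vy_lt m : (nf m vy < b)%N.
Proof. by rewrite /nf mono_vy ltn_mod. Qed.

Lemma reduced_bideg_inj (m m' : 'X_{1..3}) : (m vy < b)%N -> (m' vy < b)%N ->
  mdeg m = mdeg m' -> weight m = weight m' -> m = m'.
Proof.
move=> m_lt m'_lt deg_eq wt_eq.
have Ey : m vy = m' vy.
  have : ((m vz * b + m vy) %% b = (m' vz * b + m' vy) %% b)%N.
    by move: wt_eq; rewrite /weight !(mulnC _ b) !(addnC (b * _)) => ->.
  by rewrite !modnMDl !modn_small.
have Ez : m vz = m' vz.
  move/eqP: wt_eq; rewrite /weight Ey eqn_add2l eqn_mul2l => /orP [/eqP b0|/eqP //].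
  by move: b_gt0; rewrite b0.
have Ex : m vx = m' vx by move: deg_eq; rewrite !mdegE3 Ey Ez; lia.
by rewrite [m]mono_coords [m']mono_coords Ex Ey Ez.
Qed.

Lemma nf_eq_reduced m (s : 'X_{1..3}) : (s vy < b)%N ->
  (nf m == s) = (mdeg m == mdeg s) && (weight m == weight s).
Proof.
move=> s_lt; apply/eqP/andP => [<-|[/eqP deg_eq /eqP wt_eq]].
  by rewrite mdeg_nf weight_nf.
by apply: reduced_bideg_inj; rewrite ?nf_vy_lt ?mdeg_nf ?weight_nf.
Qed.

Lemma X_sub_in_ideal_bideg m m' : mdeg m = mdeg m' -> weight m = weight m' ->
  I (X m - X m').
Proof.
move=> deg_eq wt_eq; have nf_eq : nf m = nf m'.
  by apply/eqP; rewrite nf_eq_reduced ?nf_vy_lt // mdeg_nf weight_nf deg_eq wt_eq !eqxx.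
have -> : X m - X m' = (X m - X (nf m)) - (X m' - X (nf m')) by rewrite nf_eq; ring.
by apply: in_idealB; apply: X_sub_nf_in_ideal.
Qed.

Lemma X_in_ideal_nonstandard_nf m : ~~ standardm (nf m) -> I (X m).
Proof.
move=> nstd; have -> : X m = (X m - X (nf m)) + X (nf m) by rewrite subrK.
apply: in_idealD; first exact: X_sub_nf_in_ideal.
by rewrite [nf m]mono_coords; apply: X_in_ideal_nonstandard; rewrite ?nf_vy_lt.
Qed.

Definition std_at (d w : nat) : bool :=
  [exists i : 'I_d.+1, exists j : 'I_d.+1, exists k : 'I_d.+1,
     [&& standard i j k, (i + j + k == d)%N & (j + b * k == w)%N]].

Lemma std_atP d w : reflect
  (exists i j k, [/\ standard i j k, (i + j + k = d)%N & (j + b * k = w)%N])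
  (std_at d w).
Proof.
apply: (iffP existsP) => [[i /existsP [j /existsP [k]]]|[i [j [k [std_ijk dE wE]]]]].
  by case/and3P=> std_ijk /eqP dE /eqP wE; exists i, j, k.
have lti : (i < d.+1)%N by rewrite ltnS -dE -addnA leq_addr.
have ltj : (j < d.+1)%N by rewrite ltnS -dE addnAC leq_addl.
have ltk : (k < d.+1)%N by rewrite ltnS -dE leq_addl.
exists (Ordinal lti); apply/existsP; exists (Ordinal ltj); apply/existsP.
by exists (Ordinal ltk); rewrite /= std_ijk dE wE !eqxx.
Qed.

Lemma std_at_standardm m : standardm m -> std_at (mdeg m) (weight m).
Proof. by move=> std_m; apply/std_atP; exists (m vx), (m vy), (m vz); rewrite mdegE3. Qed.

Lemma std_at_weight_lt d w : std_at d w -> (w < b * c)%N.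
Proof.
move=> /std_atP [i [j [k [/and5P [_ jb kc _ _] _ <-]]]].
have : (b * k <= b * c.-1)%N by rewrite leq_mul2l -ltnS prednK // kc orbT.
by rewrite -[in Y in (_ < Y)%N](prednK c_gt0) mulnS; lia.
Qed.

Lemma X_in_ideal_off_std m : ~~ std_at (mdeg m) (weight m) -> I (X m).
Proof.
move=> off; apply: X_in_ideal_nonstandard_nf; apply: contra off => std_nf.
by rewrite -mdeg_nf -weight_nf; apply: std_at_standardm.
Qed.

Lemma nf_mul_monomial_gen (l : 'I_5) : val l != 1%N ->
  exists e, gens l = X e /\ forall m, ~~ standardm (nf (m + e)%MM).
Proof.
have nfD m i j k : exists u v t,
    standardm (nf (m + mono i j k)%MM) = standard (m vx + i + u) v (m vz + k + t) /\
    ((t = 0 /\ v = m vy + j) \/ (0 < t /\ b - 1 <= u))%N.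
  exists ((b - 1) * ((m vy + j) %/ b))%N, ((m vy + j) %% b)%N, ((m vy + j) %/ b)%N.
  split; first by rewrite /standardm /nf !mono_vx !mono_vy !mono_vz !mnmDE
                          !mono_vx !mono_vy !mono_vz.
  have [small|big] := ltnP (m vy + j) b; [left | right].
    by rewrite (divn_small small) (modn_small small).
  have t_gt0 : (0 < (m vy + j) %/ b)%N by rewrite divn_gt0.
  by rewrite leq_pmulr.
case: l => [[|[|[|[|[|l]]]]] lt5] //= _.
- exists (mono a 0 0); split=> [|m]; first exact: gensE0.
  by have [u [v [t [-> ?]]]] := nfD m a 0 0; apply/negP; rewrite /standard; lia.
- exists (mono 0 0 c); split=> [|m]; first exact: gensE2.
  by have [u [v [t [-> ?]]]] := nfD m 0 0 c; apply/negP; rewrite /standard; lia.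
- exists (mono (a + 1 - b) q 0); split=> [|m]; first exact: gensE3.
  have [u [v [t [-> ?]]]] := nfD m (a + 1 - b)%N q 0.
  by apply/negP; rewrite /standard; lia.
- exists (mono 0 q (c - 1)); split=> [|m]; first exact: gensE4.
  by have [u [v [t [-> ?]]]] := nfD m 0 q (c - 1)%N; apply/negP; rewrite /standard; lia.
Qed.

(* On standard bidegrees [bicoef] is a well-defined functional on R/I: [psi]
   kills the binomial, and all other generators are monomials whose multiples
   have nonstandard normal forms. *)
Lemma bicoef_ideal_eq0 d w f : std_at d w -> I f -> bicoef d w f = 0.
Proof.
move=> /std_atP [i [j [k [std_ijk dE wE]]]] [g ->]; rewrite bicoef_sum big1 // => l _.
have [l1|l_ne1] := eqVneq (val l) 1%N.
  have -> : l = @Ordinal 5 1 isT by apply: val_inj.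
  rewrite /bicoef psiM gensE1 psiB !psiX !mdeg_mono /weight !mono_vy !mono_vz.
  have -> : (0 + b + 0 = b - 1 + 0 + 1)%N by lia.
  by rewrite muln0 muln1 !addn0 add0n subrr mulr0 !coef0.
have [e [-> nstd]] := nf_mul_monomial_gen l_ne1.
rewrite {1}(mpolyE (g l)) mulr_suml bicoef_sum big1 // => m _.
rewrite -scalerAl -mpolyXD bicoefZ bicoefX.
case: (boolP (_ && _)) => [/andP [/eqP deg_me /eqP wt_me]|]; last by rewrite mulr0.
have nf_me : nf (m + e)%MM = mono i j k.
  apply/eqP; rewrite nf_eq_reduced ?mono_vy; last by case/and5P: std_ijk.
  by rewrite mdeg_mono deg_me dE /weight mono_vy mono_vz -/(weight _) wt_me wE !eqxx.
by move: (nstd m); rewrite nf_me /standardm mono_vx mono_vy mono_vz std_ijk.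
Qed.

Definition reduce (p : R) : R :=
  \sum_(m <- msupp p) p@_m *: (if standardm (nf m) then X (nf m) else 0).

Lemma sub_reduce_in_ideal p : I (p - reduce p).
Proof.
rewrite {1}(mpolyE p) /reduce -sumrB; apply: in_ideal_sum => m _.
rewrite -scalerBr; apply: in_idealZ.
case: ifP => [_|/negbT nstd]; first exact: X_sub_nf_in_ideal.
by rewrite subr0; apply: X_in_ideal_nonstandard_nf.
Qed.

Lemma mcoeff_reduce p s :
  (reduce p)@_s = if standardm s then bicoef (mdeg s) (weight s) p else 0.
Proof.
rewrite /reduce raddf_sum /=; case: ifP => std_s.
  rewrite bicoefE; apply: eq_bigr => m _; rewrite mcoeffZ; congr (_ * _).
  have s_lt : (s vy < b)%N by case/and5P: std_s.
  rewrite -nf_eq_reduced //; case: ifP => std_nf; first by rewrite mcoeffX.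
  by rewrite mcoeff0; case: eqP => // nf_s; rewrite nf_s std_s in std_nf.
rewrite big1 // => m _; rewrite mcoeffZ.
case: ifP => std_nf; last by rewrite mcoeff0 mulr0.
rewrite mcoeffX; case: eqP => [nf_s|_]; last by rewrite mulr0.
by rewrite -nf_s std_nf in std_s.
Qed.

Lemma bicoef_reduce_off_std p d w : ~~ std_at d w -> bicoef d w (reduce p) = 0.
Proof.
move=> off; rewrite bicoef_sum big1 // => m _; rewrite bicoefZ.
case: ifP => std_nf; last by rewrite /bicoef /psi mmap0 !coef0 mulr0.
rewrite bicoefX; case: (boolP (_ && _)) => [/andP [/eqP dE /eqP wE]|].
  by move: off; rewrite -dE -wE std_at_standardm.
by rewrite mulr0.
Qed.

Lemma bicoef_dhomog_eq0 d d' w f : homogd d f -> d' != d -> bicoef d' w f = 0.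
Proof.
move=> f_d d'_ne; rewrite bicoefE big_seq big1 // => m m_f.
by rewrite (dhomog_mf f_d m_f) eq_sym (negbTE d'_ne) mulr0.
Qed.

Lemma Lmul_injective d (Y : pred nat) :
  (forall w, std_at d w -> Y w -> std_at d.+1 w.+1 /\ (std_at d w.+1 -> Y w.+1)) ->
  (forall w, std_at d w -> ~~ Y w ->
     std_at d.+1 w /\ (forall w', w = w'.+1 -> std_at d w' -> ~~ Y w')) ->
  mult_injective gens L d.
Proof.
move=> HY HnY f f_d ILf; set r := reduce f.
have ILr : I (L * r).
  have -> : L * r = L * f - L * (f - r) by ring.
  by apply/in_idealB/in_idealMl/sub_reduce_in_ideal.
have Lr_eq w : std_at d.+1 w ->
    bicoef d w r + (if w is w'.+1 then bicoef d w' r else 0) = 0.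
  by move=> A1w; rewrite -bicoef_Lmul; apply: bicoef_ideal_eq0.
have r_d0 w : bicoef d w r = 0.
  apply: (@split_chain_ind (std_at d) Y (fun w => bicoef d w r = 0) (b * c)) => {w}.
  - by move=> w; apply: bicoef_reduce_off_std.
  - by move=> w; apply: std_at_weight_lt.
  - move=> w Aw Yw; have [A1w' Yw'] := HY w Aw Yw; split => // r_w'.
    by move: (Lr_eq _ A1w') => /=; rewrite r_w' add0r.
  - move=> w Aw Yw; have [A1w Yw'] := HnY w Aw Yw; split => // r_prev.
    move: (Lr_eq _ A1w); case: w {Aw Yw A1w Yw'} r_prev => [|w] r_prev /=.
      by rewrite addr0.
    by rewrite (r_prev w) // addr0.
suff r0 : r = 0 by move: (sub_reduce_in_ideal f); rewrite -/r r0 subr0.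
apply/mpolyP => s; rewrite mcoeff0 mcoeff_reduce; case: ifP => // std_s.
have [deg_s|] := eqVneq (mdeg s) d; last exact: bicoef_dhomog_eq0.
move: (bicoef_ideal_eq0 (std_at_standardm std_s) (sub_reduce_in_ideal f)).
by rewrite bicoefB -/r deg_s r_d0 subr0.
Qed.

Definition in_Limage d (h : R) := exists2 f : R, homogd d f & I (h - L * f).

Lemma in_Limage_ideal d h : I h -> in_Limage d h.
Proof. by move=> Ih; exists 0; [exact: dhomog0 | rewrite mulr0 subr0]. Qed.

Lemma in_LimageD d h1 h2 : in_Limage d h1 -> in_Limage d h2 -> in_Limage d (h1 + h2).
Proof.
move=> [f1 f1_d I1] [f2 f2_d I2]; exists (f1 + f2); first exact: dhomogD.
have -> : h1 + h2 - L * (f1 + f2) = (h1 - L * f1) + (h2 - L * f2) by ring.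
exact: in_idealD.
Qed.

Lemma in_LimageZ d (k : K) h : in_Limage d h -> in_Limage d (k *: h).
Proof.
move=> [f f_d If]; exists (k *: f); first exact: dhomogZ.
by rewrite -scalerAr -scalerBr; apply: in_idealZ.
Qed.

Lemma in_Limage_eqmod d h h' : I (h - h') -> in_Limage d h' -> in_Limage d h.
Proof.
move=> Ihh' [f f_d If]; exists f => //.
have -> : h - L * f = (h - h') + (h' - L * f) by ring.
exact: in_idealD.
Qed.

Lemma in_Limage_Lmul_sub d f h :
  homogd d f -> in_Limage d h -> in_Limage d (L * f - h).
Proof.
move=> f_d [g g_d Ig]; exists (f - g); first by rewrite /homogd rpredB.
have -> : L * f - h - L * (f - g) = - (h - L * g) by ring.
exact: in_idealN.
Qed.

Lemma in_Limage_sum d (s : seq 'X_{1..3}) (F : 'X_{1..3} -> R) :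
  (forall m, m \in s -> in_Limage d (F m)) -> in_Limage d (\sum_(m <- s) F m).
Proof.
move=> Fs; rewrite big_seq; apply: big_ind => //; last exact: in_LimageD.
exact/in_Limage_ideal/in_ideal0.
Qed.

Definition reached d w :=
  forall m, mdeg m = d.+1 -> weight m = w -> in_Limage d (X m).

Lemma reachedE d w m0 : mdeg m0 = d.+1 -> weight m0 = w ->
  reached d w <-> in_Limage d (X m0).
Proof.
move=> deg0 wt0; split => [|Lm0 m deg_m wt_m]; first exact.
apply: in_Limage_eqmod Lm0; apply: X_sub_in_ideal_bideg; congruence.
Qed.

Lemma reached_off_std d w : ~~ std_at d.+1 w -> reached d w.
Proof.
by move=> off m deg_m wt_m; apply/in_Limage_ideal/X_in_ideal_off_std; rewrite deg_m wt_m.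
Qed.

Lemma reached_succ d w : std_at d w -> reached d w <-> reached d w.+1.
Proof.
move=> /std_atP [i [j [k [_ dE wE]]]].
have s_d : homogd d (X (mono i j k)) by rewrite /homogd dhomogX /= mdeg_mono dE.
rewrite (@reachedE d w (mono i.+1 j k)) ?mdeg_mono /weight ?mono_vy ?mono_vz; try lia.
rewrite (@reachedE d w.+1 (mono i j.+1 k)) ?mdeg_mono /weight ?mono_vy ?mono_vz; try lia.
have Ls := Lmul_mono K i j k.
split=> [/(in_Limage_Lmul_sub s_d)|/(in_Limage_Lmul_sub s_d)]; rewrite Ls.
  by rewrite addrC addKr.
by rewrite addrK.
Qed.

Lemma Lmul_surjective d (Z : pred nat) :
  (forall w, std_at d.+1 w -> Z w -> std_at d w /\ (std_at d.+1 w.+1 -> Z w.+1)) ->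
  (forall w, std_at d.+1 w -> ~~ Z w ->
     exists w', [/\ w = w'.+1, std_at d w' & std_at d.+1 w' -> ~~ Z w']) ->
  mult_surjective gens L d.
Proof.
move=> HZ HnZ h h_d.
have reached_all w : reached d w.
  apply: (@split_chain_ind (std_at d.+1) Z (reached d) (b * c)) => {w}.
  - exact: reached_off_std.
  - by move=> w; apply: std_at_weight_lt.
  - move=> w Aw Zw; have [A0w Zw'] := HZ w Aw Zw.
    by split=> //; apply: (reached_succ A0w).2.
  - move=> w Aw Zw; have [w' [-> A0w' Zw']] := HnZ w Aw Zw.
    by split=> [prev|_ [<-] //]; apply/(reached_succ A0w')/prev.
rewrite (mpolyE h); apply: in_Limage_sum => m m_h; apply: in_LimageZ.
exact: reached_all _ _ (dhomog_mf h_d m_h) erefl.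
Qed.

Lemma quotient_artinian_gensI : quotient_artinian gens.
Proof.
exists (a + b + c)%N => d d_ge f f_d; rewrite (mpolyE f).
apply: in_ideal_sum => m m_f; apply/in_idealZ/X_in_ideal_off_std.
apply/std_atP => -[i [j [k [/and5P [ia jb kc _ _] dE _]]]].
by rewrite (dhomog_mf f_d m_f) in dE; lia.
Qed.

End GammaOne.

Section CaseB2.
Variables (a c d : nat).
Hypotheses (c_ge2 : (2 <= c)%N) (c_le_a : (c <= a)%N).
Local Notation std_at := (std_at a 2 c 1).

Lemma b2_std_at_succ w : (d <= a - 2)%N -> std_at d w -> std_at d.+1 w.
Proof.
move=> d_le /std_atP [i [j [k []]]]; rewrite /standard => std_ijk dE wE.
by apply/std_atP; exists i.+1, j, k; rewrite /standard; split; lia.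
Qed.

Lemma b2_std_at_pred w : (a - 1 <= d)%N -> std_at d.+1 w -> std_at d w.
Proof.
move=> d_ge /std_atP [i [j [k []]]]; rewrite /standard => std_ijk dE wE.
by apply/std_atP; exists i.-1, j, k; rewrite /standard; split; lia.
Qed.

End CaseB2.

Section CaseC2.
Variables (a b beta d : nat).
Hypotheses (b_ge2 : (2 <= b)%N) (b_le_a : (b <= a)%N).
Hypotheses (beta_ge1 : (1 <= beta)%N) (beta_lt_b : (beta < b)%N).
Local Notation std_at := (std_at a b 2 beta).
Local Notation q := (b - beta)%N.

Definition c2_upper_inj w :=
  [&& (w < b)%N, (d - w < a + 1 - b)%N & (a - b + q <= d)%N].

Definition c2_upper_surj w :=
  ~~ [&& (w < b)%N, (d.+1 - w < a + 1 - b)%N & (d.+1 <= b - 1)%N].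

Lemma c2_inj_upper w : (d.*2 + 2 <= a + q)%N -> std_at d w -> c2_upper_inj w ->
  std_at d.+1 w.+1 /\ (std_at d w.+1 -> c2_upper_inj w.+1).
Proof.
move=> d_le /std_atP [i [j [k [std_ijk dE wE]]]]; rewrite /c2_upper_inj.
move: std_ijk; rewrite /standard; case: k dE wE => [|[|k]] dE wE std_ijk Y_w; try lia.
split; first by apply/std_atP; exists i, j.+1, 0%N; rewrite /standard; split; lia.
case/std_atP=> [i' [j' [[|[|k']] [std' dE' wE']]]]; move: std'; rewrite /standard; lia.
Qed.

Lemma c2_inj_lower w : (d.*2 + 2 <= a + q)%N -> std_at d w -> ~~ c2_upper_inj w ->
  std_at d.+1 w /\ (forall w', w = w'.+1 -> std_at d w' -> ~~ c2_upper_inj w').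
Proof.
move=> d_le /std_atP [i [j [k [std_ijk dE wE]]]]; rewrite /c2_upper_inj.
move: std_ijk; rewrite /standard => std_ijk nY_w.
have k_lt2 : (k < 2)%N by lia.
split; first by apply/std_atP; exists i.+1, j, k; rewrite /standard;
  case: k k_lt2 dE wE std_ijk nY_w => [|[|k]] //= *; split; lia.
move=> w' w_eq /std_atP [i' [j' [k' [std' dE' wE']]]]; move: std'; rewrite /standard.
by case: k k_lt2 dE wE std_ijk nY_w => [|[|k]] //=; case: k' dE' wE' => [|[|k']]; lia.
Qed.

Lemma c2_surj_upper w : (a + q < d.*2 + 2)%N -> std_at d.+1 w -> c2_upper_surj w ->
  std_at d w /\ (std_at d.+1 w.+1 -> c2_upper_surj w.+1).
Proof.
move=> d_gt /std_atP [i [j [k [std_ijk dE wE]]]]; rewrite /c2_upper_surj.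
move: std_ijk; rewrite /standard => std_ijk Z_w.
have k_lt2 : (k < 2)%N by lia.
split; first by apply/std_atP; exists i.-1, j, k; rewrite /standard;
  case: k k_lt2 dE wE std_ijk Z_w => [|[|k]] //= *; split; lia.
move=> /std_atP [i' [j' [k' [std' dE' wE']]]]; move: std'; rewrite /standard.
by case: k k_lt2 dE wE std_ijk Z_w => [|[|k]] //=; case: k' dE' wE' => [|[|k']]; lia.
Qed.

Lemma c2_surj_lower w : (a + q < d.*2 + 2)%N -> std_at d.+1 w -> ~~ c2_upper_surj w ->
  exists w', [/\ w = w'.+1, std_at d w' & std_at d.+1 w' -> ~~ c2_upper_surj w'].
Proof.
move=> d_gt /std_atP [i [j [k [std_ijk dE wE]]]]; rewrite /c2_upper_surj !negbK.
move: std_ijk; rewrite /standard; case: k dE wE => [|[|k]] dE wE std_ijk nZ_w; try lia.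
exists j.-1; split; first by lia.
  by apply/std_atP; exists i, j.-1, 0%N; rewrite /standard; split; lia.
case/std_atP=> [i' [j' [[|[|k']] [std' dE' wE']]]]; move: std'; rewrite /standard; lia.
Qed.

End CaseC2.

Lemma homogd1_L (K : fieldType) : homogd 1 (xv + yv : {mpoly K[3]}).
Proof. by rewrite /homogd rpredD // dhomogX /= mdeg1. Qed.

Lemma Lmul_maximal_rank_b2 (K : fieldType) a c d : (2 <= c)%N -> (c <= a)%N ->
  mult_injective (gensI K a 2 c 1 1) (xv + yv) d \/
  mult_surjective (gensI K a 2 c 1 1) (xv + yv) d.
Proof.
move=> c_ge2 c_le_a.
have [b_gt0 b_le c_gt0] : [/\ (0 < 2)%N, (2 <= a + 1)%N & (0 < c)%N] by split; lia.
have [d_le|d_gt] := leqP d (a - 2).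
  left; apply: (@Lmul_injective K a 2 c 1 b_gt0 b_le c_gt0 d pred0) => // w Aw _.
  by split=> //; apply: b2_std_at_succ.
right; apply: (@Lmul_surjective K a 2 c 1 b_gt0 b_le c_gt0 d predT) => // w Aw _.
by split=> //; apply: b2_std_at_pred => //; lia.
Qed.

Lemma Lmul_maximal_rank_c2 (K : fieldType) a b beta d :
  (2 <= b)%N -> (b <= a)%N -> (1 <= beta)%N -> (beta < b)%N ->
  mult_injective (gensI K a b 2 beta 1) (xv + yv) d \/
  mult_surjective (gensI K a b 2 beta 1) (xv + yv) d.
Proof.
move=> b_ge2 b_le_a beta_ge1 beta_lt_b.
have [b_gt0 b_le c_gt0] : [/\ (0 < b)%N, (b <= a + 1)%N & (0 < 2)%N] by split; lia.
have [d_le|d_gt] := leqP (d.*2 + 2) (a + (b - beta)).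
  left; apply: (@Lmul_injective K a b 2 beta b_gt0 b_le c_gt0 d
                  (c2_upper_inj a b beta d)).
    by move=> w; apply: c2_inj_upper.
  by move=> w; apply: c2_inj_lower.
right; apply: (@Lmul_surjective K a b 2 beta b_gt0 b_le c_gt0 d (c2_upper_surj a b d)).
  by move=> w; apply: c2_surj_upper.
by move=> w; apply: c2_surj_lower.
Qed.

Theorem corollary3p8 (K : fieldType) (a b c beta gamma : nat) :
  [pchar K] =i pred0 ->
  (c <= a)%N -> (2 <= c)%N ->
  (1 <= beta)%N -> (beta + 1 <= b)%N ->
  (1 <= gamma)%N -> (b + 1 <= a + gamma)%N ->
  (gamma + 1 <= b)%N -> (gamma + 1 <= c)%N ->
  (a = 2 \/ b = 2 \/ c = 2)%N ->
  hasWLP (gensI K a b c beta gamma).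
Proof.
move=> _ c_le_a c_ge2 beta_ge1 beta_lt_b gamma_ge1 b_le gamma_lt_b gamma_lt_c abc2.
have -> : gamma = 1%N by lia.
split; first by apply: quotient_artinian_gensI; lia.
exists (xv + yv); split=> [|d]; first exact: homogd1_L.
have [b2|c2] : b = 2%N \/ c = 2%N by lia.
  subst b; have -> : beta = 1%N by lia.
  exact: Lmul_maximal_rank_b2.
by subst c; apply: Lmul_maximal_rank_c2; lia.
Qed.
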